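(* A (possibly infinite) tree $T$ is cat-win if and only if $T$ contains the infinite complete binary tree $B^{\omega}$ as a minor.
   Context: Cat Herding is played on a simple, possibly infinite graph $G$. The cat first places its token on a vertex. Then the players alternate, the herder moving first: the herder deletes one edge of the current graph, and then, unless the cat's current vertex has degree $0$ in the current graph, the cat moves its token along a finite path with at least one edge in the current graph to a different vertex. The cat is captured when its vertex has degree $0$ in the current graph. $G$ is cat-win if the cat has a strategy (including the choice of starting vertex) that is never captured, and herder-win if the herder has a strategy that eventually captures the cat. $B^{\omega}$ is the graph with vertex set $\{L,R\}^*$ (all finite words over $\{L,R\}$) and edges between $\alpha$ and $\alpha t$ for all $\alpha\in\{L,R\}^*$, $t\in\{L,R\}$. *)

From Stdlib Require Import List Relations.
Import ListNotations.

Section Graphs.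
Variable V : Type.
Variable adj : V -> V -> Prop.

Definition simple_graph : Prop :=
  (forall x y, adj x y -> adj y x) /\ (forall x, ~ adj x x).

Fixpoint walk (x : V) (l : list V) : Prop :=
  match l with
  | [] => True
  | y :: t => adj x y /\ walk y t
  end.

Definition has_cycle : Prop :=
  exists (x : V) (l : list V),
    NoDup (x :: l) /\ 2 <= length l /\ walk x l /\ adj (last l x) x.

Definition connected : Prop := forall u v, clos_refl_trans V adj u v.

Definition is_tree : Prop := simple_graph /\ connected /\ ~ has_cycle.

(* A history is the list of edges deleted so far, most recent first. *)
Definition history := list (V * V).

Definition cur_adj (h : history) (x y : V) : Prop :=
  adj x y /\ ~ In (x, y) h /\ ~ In (y, x) h.

Inductive legal_history : history -> Prop :=
  | legal_nil : legal_history []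
  | legal_cons : forall h a b,
      legal_history h -> cur_adj h a b -> legal_history ((a, b) :: h).

(* A cat strategy: a starting vertex c0 and a move function sigma giving the
   cat's new vertex after the herder's deletions h (the cat's own past moves
   are determined by the herder's deletions). *)
Definition cat_pos (c0 : V) (sigma : history -> V) (h : history) : V :=
  match h with [] => c0 | _ => sigma h end.

(* The strategy is never captured: the start vertex is not isolated, and after
   any legal sequence of herder deletions ending with the deletion of an edge e
   of the current graph, the cat's vertex still has positive degree and the
   prescribed move is to a different vertex reachable by a path with at least
   one edge in the current graph. *)
Definition cat_strategy_wins (c0 : V) (sigma : history -> V) : Prop :=
  (exists y, adj c0 y) /\
  forall (h : history) (a b : V),
    legal_history h -> cur_adj h a b ->
    let p := cat_pos c0 sigma h in
    let h' := (a, b) :: h in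
    (exists y, cur_adj h' p y) /\
    sigma h' <> p /\
    clos_trans V (cur_adj h') p (sigma h').

Definition cat_win : Prop :=
  exists (c0 : V) (sigma : history -> V), cat_strategy_wins c0 sigma.

End Graphs.

Definition is_minor (W : Type) (adjH : W -> W -> Prop)
                    (V : Type) (adjG : V -> V -> Prop) : Prop :=
  exists B : W -> V -> Prop,
    (forall w, exists v, B w v) /\
    (forall w w' v, B w v -> B w' v -> w = w') /\
    (forall w u v, B w u -> B w v ->
       clos_refl_trans V (fun x y => adjG x y /\ B w x /\ B w y) u v) /\
    (forall w w', adjH w w' -> exists u v, B w u /\ B w' v /\ adjG u v).

Inductive LR := L | R.

Definition Bomega_adj (a b : list LR) : Prop :=
  (exists t, b = a ++ [t]) \/ (exists t, a = b ++ [t]).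

(* If T has a B^omega minor with branch sets B w, the cat sits in B w next to B (w L) and
   keeps the invariant that no deleted edge lies inside the union of the B (w s).  When the
   herder deletes an edge touching the part below w L the cat walks through B w into
   B (w R), otherwise into B (w L); the edges it uses are never deleted.

   Conversely fix a winning cat strategy on a tree, and call the branch of an edge pq (the
   side of q once pq is removed) confinable if the herder can trap the cat in it.  Inside
   a confinable branch there are two disjoint confinable branches pointing away from its
   root: otherwise all such branches are nested, so once the herder cuts one of them the
   cat is confined to the finite path leading to it, and deleting that path captures it.
   Iterating yields nested branches indexed by words, and each branch minus its two
   children is a connected branch set of a B^omega minor. *)

From Stdlib Require Import List Relations Classical ClassicalEpsilon Lia.
Import ListNotations.

Section Relations.
Context {A : Type}.
Implicit Types (R S : A -> A -> Prop) (P : A -> Prop).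
Notation crt := (clos_refl_trans A).

Lemma clos_rt_sym R : (forall a b, R a b -> R b a) -> forall a b, crt R a b -> crt R b a.
Proof. intros HR a b H; induction H; eauto using clos_refl_trans. Qed.

Lemma clos_rt_mono R S : (forall a b, R a b -> S a b) -> forall a b, crt R a b -> crt S a b.
Proof. intros HRS a b H; induction H; eauto using clos_refl_trans. Qed.

Lemma clos_rt_step_trans R a b c d : crt R a b -> R b c -> crt R c d -> clos_trans A R a d.
Proof.
  intros Hab Hbc Hcd. apply clos_rt_t with b; [exact Hab|].
  assert (Hc : clos_trans A R b c) by (apply t_step; exact Hbc).
  clear Hab Hbc. induction Hcd; eauto using clos_trans.
Qed.

Lemma clos_rt_exit R P a b : crt R a b -> P a -> ~ P b ->
  exists a1 b1, crt R a a1 /\ R a1 b1 /\ P a1 /\ ~ P b1.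
Proof.
  intro H. apply clos_rt_rt1n in H. induction H as [x|x y z Hxy Hyz IH]; intros Ha Hb.
  - contradiction.
  - destruct (classic (P y)) as [Hy|Hy].
    + destruct (IH Hy Hb) as (a1 & b1 & H1 & H2 & H3 & H4). exists a1, b1.
      split; [eapply rt_trans; [apply rt_step; exact Hxy|exact H1]|auto].
    + exists x, y. repeat split; auto. apply rt_refl.
Qed.

Lemma clos_rt_first_step R a u : crt R a u -> a <> u ->
  exists z, R a z /\ crt (fun p q => R p q /\ p <> a /\ q <> a) z u.
Proof.
  intros H. apply clos_rt_rtn1 in H. induction H as [|u' u Hr H IH]; intros Hne.
  - congruence.
  - destruct (classic (u' = a)) as [->|Hne'].
    + exists u; split; [exact Hr|apply rt_refl].
    + destruct (IH (not_eq_sym Hne')) as (z & Hz & Hc). exists z; split; [exact Hz|].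
      eapply rt_trans; [exact Hc|apply rt_step; auto].
Qed.

Lemma clos_rt_in_reach R d u : crt R d u ->
  crt (fun a b => R a b /\ crt R d a /\ crt R d b) d u.
Proof.
  intros H. apply clos_rt_rtn1 in H. induction H as [|y z Hyz H IH].
  - apply rt_refl.
  - assert (Hy : crt R d y) by (apply clos_rtn1_rt; exact H).
    eapply rt_trans; [exact IH|apply rt_step; repeat split; auto].
    eapply rt_trans; [exact Hy|apply rt_step; exact Hyz].
Qed.

Lemma last_cons_default (a b : A) l : last (b :: l) a = last l b.
Proof.
  revert a b; induction l as [|c l IH]; intros a b; [reflexivity|].
  change (last (c :: l) a = last (c :: l) b). rewrite !IH. reflexivity.
Qed.

Lemma walk_app R a l1 l2 :
  walk A R a (l1 ++ l2) <-> walk A R a l1 /\ walk A R (last l1 a) l2.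
Proof.
  revert a; induction l1 as [|y l IH]; intros a; cbn [app walk]; [tauto|].
  rewrite IH, last_cons_default. tauto.
Qed.

Lemma walk_mono R S a l : (forall x y, R x y -> S x y) -> walk A R a l -> walk A S a l.
Proof.
  intros HRS; revert a; induction l as [|y l IH]; intros a Hw; simpl in *; [exact I|].
  destruct Hw; split; auto.
Qed.

Lemma walk_target R a l v : walk A R a l -> In v l -> exists u, R u v.
Proof.
  revert a; induction l as [|y l IH]; intros a Hw Hin; simpl in *; [contradiction|].
  destruct Hw as [H1 H2]. destruct Hin as [->|Hin]; eauto.
Qed.

Lemma walk_restrict R P a l : walk A R a l -> P a -> (forall v, In v l -> P v) ->
  crt (fun x y => R x y /\ P x /\ P y) a (last l a).
Proof.
  revert a; induction l as [|y l IH]; intros a Hw Ha Hl; cbn [walk In] in *; [apply rt_refl|].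
  destruct Hw as [H1 H2]. rewrite last_cons_default.
  apply rt_trans with y; [apply rt_step; auto|]. apply IH; auto.
Qed.

Lemma clos_rt_simple_walk R a b : crt R a b ->
  exists l, walk A R a l /\ last l a = b /\ NoDup (a :: l).
Proof.
  intros H; apply clos_rt_rtn1 in H; induction H as [|y z Hyz H IH].
  - exists []; repeat split; repeat constructor; simpl; tauto.
  - destruct IH as (l & Hw & Hl & Hn).
    destruct (classic (In z (a :: l))) as [[Hin|Hin]|Hin].
    + subst z. exists []; repeat split; repeat constructor; simpl; tauto.
    + apply in_split in Hin. destruct Hin as (l1 & l2 & ->).
      apply walk_app in Hw. destruct Hw as [Hw1 Hw2].
      exists (l1 ++ [z]). repeat split.
      * apply walk_app. simpl in Hw2 |- *. tauto.
      * apply last_last.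
      * apply (NoDup_app_remove_r _ l2). rewrite app_comm_cons, <- app_assoc. exact Hn.
    + exists (l ++ [z]). repeat split.
      * apply walk_app. rewrite Hl. simpl; auto.
      * apply last_last.
      * rewrite app_comm_cons. apply NoDup_app; [exact Hn|repeat constructor; simpl; tauto|].
        intros v Hv [<-|[]]. contradiction.
Qed.

Fixpoint walk_edges (a : A) (l : list A) : list (A * A) :=
  match l with [] => [] | b :: t => (a, b) :: walk_edges b t end.

Lemma walk_edges_target a l u v : In (u, v) (walk_edges a l) -> In v l.
Proof.
  revert a; induction l as [|y l IH]; intros a H; simpl in *; [contradiction|].
  destruct H as [H|H]; [injection H as -> ->; left; reflexivity|right; eapply IH; eauto].
Qed.

Lemma walk_exit R P a l : walk A R a l -> P a -> ~ P (last l a) ->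
  exists u v, In (u, v) (walk_edges a l) /\ R u v /\ P u /\ ~ P v.
Proof.
  revert a; induction l as [|y l IH]; intros a Hw Ha Hl; cbn [walk In] in *; [contradiction|].
  destruct Hw as [H1 H2]. rewrite last_cons_default in Hl.
  destruct (classic (P y)) as [Hy|Hy].
  - destruct (IH y H2 Hy Hl) as (u & v & ? & ? & ? & ?). exists u, v; split; [right|]; auto.
  - exists a, y; split; [left|]; auto.
Qed.

Lemma list_prefix_or_diverge (w w' : list A) :
  w = w' \/ (exists t s, w' = w ++ t :: s) \/ (exists t s, w = w' ++ t :: s) \/
  exists p t t' s s', t <> t' /\ w = p ++ t :: s /\ w' = p ++ t' :: s'.
Proof.
  revert w'; induction w as [|t w IH]; intros [|t' w'].
  - left; reflexivity.
  - right; left; exists t', w'; reflexivity.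
  - right; right; left; exists t, w; reflexivity.
  - destruct (classic (t = t')) as [<-|Hne].
    + destruct (IH w') as [->|[(u & s & ->)|[(u & s & ->)|(p & u & u' & s & s' & Hu & -> & ->)]]].
      * left; reflexivity.
      * right; left; exists u, s; reflexivity.
      * right; right; left; exists u, s; reflexivity.
      * right; right; right; exists (t :: p), u, u', s, s'; auto.
    + right; right; right; exists [], t, t', w, w'; auto.
Qed.

End Relations.

Section Trees.
Variable V : Type.
Variable adj : V -> V -> Prop.
Hypothesis adj_sym : forall x y, adj x y -> adj y x.
Hypothesis adj_irrefl : forall x, ~ adj x x.
Hypothesis acyclic : ~ has_cycle V adj.
Hypothesis adj_connected : connected V adj.
Notation crt := (clos_refl_trans V).

Definition avoid_edge (p q a b : V) : Prop :=
  adj a b /\ ~ (a = p /\ b = q) /\ ~ (a = q /\ b = p).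

Definition branch (p q v : V) : Prop := crt (avoid_edge p q) q v.

Lemma avoid_edge_sym p q a b : avoid_edge p q a b -> avoid_edge p q b a.
Proof. intros (H1 & H2 & H3); repeat split; auto; intros [-> ->]; tauto. Qed.

Lemma avoid_edge_comm p q a b : avoid_edge p q a b -> avoid_edge q p a b.
Proof. unfold avoid_edge; tauto. Qed.

Lemma branch_not_tail p q : adj p q -> ~ branch p q p.
Proof.
  intros Hpq H. apply acyclic.
  apply clos_rt_sym in H; [|apply avoid_edge_sym].
  destruct (clos_rt_first_step _ _ _ H) as (z & (Hz & Hzq & _) & Hc).
  { intros ->; exact (adj_irrefl _ Hpq). }
  destruct (clos_rt_simple_walk _ _ _ Hc) as (l & Hw & Hl & Hn).
  assert (Hzq' : z <> q) by (intros ->; tauto).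
  exists p, (z :: l). repeat split.
  - constructor; [|exact Hn]. intros [->|Hin]; [exact (adj_irrefl _ Hz)|].
    destruct (walk_target _ _ _ _ Hw Hin) as (u & _ & _ & Hu). congruence.
  - destruct l as [|w l]; [simpl in Hl; congruence|simpl; auto with arith].
  - exact Hz.
  - eapply walk_mono; [|exact Hw]. intros a b H0; exact (proj1 (proj1 H0)).
  - rewrite last_cons_default, Hl. apply adj_sym; exact Hpq.
Qed.

Lemma branch_entry p q a b : adj a b -> ~ branch p q a -> branch p q b -> a = p /\ b = q.
Proof.
  intros Hab Ha Hb. apply NNPP; intros Hpq. apply Ha.
  destruct (classic (a = q /\ b = p)) as [[-> ->]|Hqp]; [apply rt_refl|].
  eapply rt_trans; [exact Hb|]. apply rt_step. apply avoid_edge_sym. repeat split; auto.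
Qed.

Lemma branch_exit p q a b : adj a b -> branch p q a -> ~ branch p q b -> a = q /\ b = p.
Proof. intros Hab Ha Hb. destruct (branch_entry p q b a (adj_sym _ _ Hab) Hb Ha); auto. Qed.

Lemma path_enters_branch S p q u w : (forall a b, S a b -> adj a b) ->
  crt S u w -> ~ branch p q u -> branch p q w -> crt S u p /\ S p q.
Proof.
  intros HS Huw Hu Hw.
  destruct (clos_rt_exit S (fun v => ~ branch p q v) u w Huw Hu (fun H => H Hw))
    as (a & b & Hua & Hab & Ha & Hb).
  apply NNPP in Hb. destruct (branch_entry p q a b (HS _ _ Hab) Ha Hb) as [-> ->]. auto.
Qed.

Lemma path_leaves_branch S p q u w : (forall a b, S a b -> adj a b) ->
  crt S u w -> branch p q u -> ~ branch p q w -> crt S u q /\ S q p.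
Proof.
  intros HS Huw Hu Hw.
  destruct (clos_rt_exit S (branch p q) u w Huw Hu Hw) as (a & b & Hua & Hab & Ha & Hb).
  destruct (branch_exit p q a b (HS _ _ Hab) Ha Hb) as [-> ->]. auto.
Qed.

Lemma reach_without_edge S p q u w : (forall a b, S a b -> adj a b) -> ~ S p q ->
  crt S u w -> ~ branch p q u -> ~ branch p q w.
Proof. intros HS Hpq Huw Hu Hw. exact (Hpq (proj2 (path_enters_branch S p q u w HS Huw Hu Hw))). Qed.

Lemma opposite_branches_disjoint p q v : adj p q -> branch p q v -> branch q p v -> False.
Proof.
  intros Hpq H1 H2. apply (branch_not_tail p q Hpq). eapply rt_trans; [exact H1|].
  apply clos_rt_sym; [apply avoid_edge_sym|]. eapply clos_rt_mono; [|exact H2].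
  apply avoid_edge_comm.
Qed.

Lemma sibling_branches_disjoint r z1 z2 v : adj r z1 -> adj r z2 -> z1 <> z2 ->
  branch r z1 v -> branch r z2 v -> False.
Proof.
  intros H1 H2 Hne B1 B2.
  assert (Hz1 : branch r z2 z1).
  { apply NNPP; intro Hn. apply (branch_not_tail r z1 H1).
    exact (proj1 (path_enters_branch _ r z2 z1 v (fun a b H => proj1 H) B1 Hn B2)). }
  destruct (branch_entry r z2 r z1 H1 (branch_not_tail r z2 H2) Hz1). auto.
Qed.

Lemma branch_subset x y p q v : branch x y q -> ~ branch p q y -> branch p q v -> branch x y v.
Proof.
  intros Hq Hy Hv. apply NNPP; intro Hn.
  exact (Hy (proj1 (path_leaves_branch _ x y q v (fun a b H => proj1 H) Hv Hq Hn))).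
Qed.

Lemma branches_disjoint p q r s v : p <> r -> adj r s -> ~ branch p q r -> ~ branch r s p ->
  branch p q v -> branch r s v -> False.
Proof.
  intros Hpr Hrs Hr Hp Hv1 Hv2.
  assert (Hs : ~ branch p q s) by (intro Hs; exact (Hpr (eq_sym (proj1 (branch_entry p q r s Hrs Hr Hs))))).
  exact (Hp (proj1 (path_enters_branch _ p q s v (fun a b H => proj1 H) Hv2 Hs Hv1))).
Qed.

Lemma branch_cover p q v : branch p q v \/ branch q p v.
Proof.
  pose proof (adj_connected q v) as Hc. apply clos_rt_rtn1 in Hc.
  induction Hc as [|y z Hyz H IH]; [left; apply rt_refl|].
  destruct (classic ((y = p /\ z = q) \/ (y = q /\ z = p))) as [[[-> ->]|[-> ->]]|Hn].
  - left; apply rt_refl.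
  - right; apply rt_refl.
  - destruct IH as [IH|IH]; [left|right]; apply rt_trans with y; auto; apply rt_step;
      repeat split; auto; intros [-> ->]; tauto.
Qed.

Lemma simple_walk_outside_branch p q u l : walk V adj u l -> NoDup (u :: l) ->
  ~ branch p q u -> ~ branch p q (last l u) -> forall v, In v l -> ~ branch p q v.
Proof.
  revert u; induction l as [|y l IH]; intros u Hw Hn Hu Hl v Hv; [contradiction|].
  destruct Hw as [Huy Hw]. rewrite last_cons_default in Hl.
  apply NoDup_cons_iff in Hn as [Hu_l Hn].
  assert (Hy : ~ branch p q y).
  { intro Hy. destruct (branch_entry p q u y Huy Hu Hy) as [-> ->].
    destruct (walk_exit adj (branch p q) q l Hw Hy Hl) as (a & b & Hin & Hab & Ha & Hb).
    destruct (branch_exit p q a b Hab Ha Hb) as [_ ->].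
    exact (Hu_l (or_intror (walk_edges_target _ _ _ _ Hin))). }
  destruct Hv as [<-|Hv]; [exact Hy|exact (IH y Hw Hn Hy Hl v Hv)].
Qed.

(* [u] lies on the tree path from [y] to [r], [r] excluded. *)
Definition on_path (y r u : V) : Prop := exists z, adj u z /\ branch u z r /\ ~ branch u z y.

Lemma on_path_edge_in_walk y W u z : walk V adj y W -> adj u z ->
  branch u z (last W y) -> ~ branch u z y -> In (u, z) (walk_edges y W).
Proof.
  intros HW Huz Hr Hy.
  destruct (walk_exit adj (fun v => ~ branch u z v) y W HW Hy (fun H => H Hr))
    as (a & b & Hin & Hab & Ha & Hb).
  apply NNPP in Hb. destruct (branch_entry u z a b Hab Ha Hb) as [-> ->]. exact Hin.
Qed.

Lemma on_path_separated S y r u u' :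
  (forall a b, S a b -> adj a b) -> (forall a b, S a b -> S b a) ->
  (forall a z, adj a z -> branch a z r -> ~ branch a z y -> ~ S a z) ->
  u = r \/ on_path y r u -> u' = r \/ on_path y r u' -> u <> u' -> crt S u u' -> False.
Proof.
  intros HS Hsym Hcut Hu Hu' Hne Huu'.
  assert (Hfar : forall a z w, adj a z -> branch a z r -> ~ branch a z y ->
            crt S a w \/ crt S w a -> ~ branch a z w).
  { intros a z w Haz Hr Hy Hw.
    destruct Hw as [Hw|Hw]; [|apply clos_rt_sym in Hw; [|exact Hsym]];
      exact (reach_without_edge S a z a w HS (Hcut a z Haz Hr Hy) Hw (branch_not_tail a z Haz)). }
  destruct Hu as [->|(z & Hz & Hr & Hy)]; destruct Hu' as [->|(z' & Hz' & Hr' & Hy')].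
  - exact (Hne eq_refl).
  - exact (Hfar u' z' r Hz' Hr' Hy' (or_intror Huu') Hr').
  - exact (Hfar u z r Hz Hr Hy (or_introl Huu') Hr).
  - apply (branches_disjoint u z u' z' r Hne Hz'); auto.
Qed.


Section Herding.
Variable c0 : V.
Variable sigma : history V -> V.
Hypothesis sigma_wins : cat_strategy_wins V adj c0 sigma.
Notation G := (cur_adj V adj).
Notation legal := (legal_history V adj).

Definition pos (h : history V) : V := cat_pos V c0 sigma h.

Definition comp (h : history V) (v : V) : Prop := crt (G h) (pos h) v.

Definition confinable (Y : V -> Prop) : Prop :=
  exists h, legal h /\ forall v, comp h v -> Y v.

Lemma cur_adj_sym h a b : G h a b -> G h b a.
Proof. intros (H1 & H2 & H3); repeat split; auto. Qed.

Lemma cur_adj_app l h a b : G (l ++ h) a b -> G h a b.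
Proof.
  intros (H1 & H2 & H3); repeat split; auto; intro; [apply H2|apply H3]; apply in_or_app; auto.
Qed.

Lemma cur_adj_deleted a b h : ~ G ((a, b) :: h) a b.
Proof. intros (_ & H & _). apply H; left; reflexivity. Qed.

Lemma cur_adj_avoid_edge h p q a b : ~ G h p q -> G h a b -> avoid_edge p q a b.
Proof.
  intros Hpq Hab. split; [exact (proj1 Hab)|].
  split; intros [-> ->]; [exact (Hpq Hab)|exact (Hpq (cur_adj_sym _ _ _ Hab))].
Qed.

Lemma legal_cons_inv a b h : legal ((a, b) :: h) -> legal h /\ G h a b.
Proof. intros H; inversion H; subst; auto. Qed.

Lemma cat_move h a b : legal h -> G h a b ->
  pos ((a, b) :: h) <> pos h /\ clos_trans V (G ((a, b) :: h)) (pos h) (pos ((a, b) :: h)).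
Proof. intros Hl Hab. destruct (proj2 sigma_wins h a b Hl Hab) as (_ & H1 & H2). auto. Qed.

Lemma cat_step h a b : legal ((a, b) :: h) -> crt (G ((a, b) :: h)) (pos h) (pos ((a, b) :: h)).
Proof.
  intros Hl. destruct (legal_cons_inv _ _ _ Hl) as [Hl0 Hab].
  apply clos_t_clos_rt, (cat_move h a b Hl0 Hab).
Qed.

Lemma cat_has_edge h : legal h -> exists y, G h (pos h) y.
Proof.
  intros Hl. destruct h as [|[a b] h].
  - destruct (proj1 sigma_wins) as [y Hy]. exists y. repeat split; auto.
  - destruct (legal_cons_inv _ _ _ Hl) as [Hl0 Hab].
    destruct (cat_move h a b Hl0 Hab) as [_ Hc].
    apply clos_trans_tn1 in Hc. destruct Hc as [y Hy|y z Hy _]; eexists; apply cur_adj_sym; exact Hy.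
Qed.

Lemma comp_app l h v : legal (l ++ h) -> comp (l ++ h) v -> comp h v.
Proof.
  induction l as [|[a b] l IH]; simpl; intros Hl Hc; [exact Hc|].
  apply IH; [exact (proj1 (legal_cons_inv _ _ _ Hl))|].
  apply rt_trans with (pos ((a, b) :: l ++ h));
    (eapply clos_rt_mono; [intros x y; apply (cur_adj_app [(a, b)])|]); [apply cat_step|]; auto.
Qed.

Lemma cut_edge_behind_cat h a b : legal h -> exists l,
  legal (l ++ h) /\ ~ G (l ++ h) a b /\ crt (G (l ++ h)) (pos h) (pos (l ++ h)).
Proof.
  intros Hl. destruct (classic (G h a b)) as [Hab|Hab].
  - exists [(a, b)]. assert (Hl1 : legal ([(a, b)] ++ h)) by (constructor; auto).
    split; [exact Hl1|split; [apply cur_adj_deleted|apply cat_step; exact Hl1]].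
  - exists []. repeat split; auto. apply rt_refl.
Qed.

Lemma delete_edges E h : legal h ->
  exists l, legal (l ++ h) /\ forall a b, In (a, b) E -> ~ G (l ++ h) a b.
Proof.
  intros Hl. induction E as [|[a b] E IH].
  - exists []. split; [exact Hl|intros a b []].
  - destruct IH as (l & Hl' & Hdel).
    destruct (classic (G (l ++ h) a b)) as [Hg|Hg].
    + exists ((a, b) :: l). split; [constructor; auto|].
      intros a' b' [Heq|Hin]; [injection Heq as -> ->; apply cur_adj_deleted|].
      intro H'; exact (Hdel a' b' Hin (cur_adj_app [(a, b)] _ _ _ H')).
    + exists l. split; [exact Hl'|]. intros a' b' [Heq|Hin]; [injection Heq as -> ->|]; auto.
Qed.

Lemma confinable_mono (Y Z : V -> Prop) : (forall v, Y v -> Z v) -> confinable Y -> confinable Z.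
Proof. intros HYZ (h & Hl & Hh). exists h; split; auto. Qed.

Lemma confinable_inhabited Y : confinable Y -> exists v, Y v.
Proof. intros (h & _ & Hh). exists (pos h). apply Hh, rt_refl. Qed.

Lemma confinable_behind_cut h a : legal h -> G h a (pos h) -> confinable (branch a (pos h)).
Proof.
  intros Hl Ha. assert (Hl1 : legal ((a, pos h) :: h)) by (constructor; auto).
  exists ((a, pos h) :: h). split; [exact Hl1|]. intros v Hv.
  eapply clos_rt_mono; [|eapply rt_trans; [apply cat_step; exact Hl1|exact Hv]].
  intros x y. apply cur_adj_avoid_edge, cur_adj_deleted.
Qed.

Lemma confine_to_neighbour_branch h a b : legal h -> G h a b -> exists z,
  G ((a, b) :: h) (pos h) z /\ confinable (fun v => branch (pos h) z v /\ comp h v).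
Proof.
  intros Hl Hab. set (h1 := (a, b) :: h).
  destruct (cat_move h a b Hl Hab) as [Hne Hpath]. fold h1 in Hne, Hpath.
  destruct (clos_rt_first_step _ _ _ (clos_t_clos_rt _ _ _ _ Hpath) (not_eq_sym Hne))
    as (z & Hz & Hrest).
  exists z; split; [exact Hz|].
  assert (Hl1 : legal h1) by (constructor; auto).
  assert (Hl2 : legal ((pos h, z) :: h1)) by (constructor; auto).
  exists ((pos h, z) :: h1). split; [exact Hl2|]. intros v Hv. split.
  - apply rt_trans with (pos h1).
    + eapply clos_rt_mono; [|exact Hrest]. intros p q (Hpq & Hp & Hq).
      split; [exact (proj1 Hpq)|]. split; intros [? ?]; congruence.
    + eapply clos_rt_mono; [|eapply rt_trans; [apply cat_step; exact Hl2|exact Hv]].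
      intros x y. apply cur_adj_avoid_edge, cur_adj_deleted.
  - exact (comp_app [(pos h, z); (a, b)] h v Hl2 Hv).
Qed.

Lemma two_confining_branches h : legal h -> exists z1 z2,
  z1 <> z2 /\ adj (pos h) z1 /\ adj (pos h) z2 /\
  confinable (fun v => branch (pos h) z1 v /\ comp h v) /\
  confinable (fun v => branch (pos h) z2 v /\ comp h v).
Proof.
  intros Hl. destruct (cat_has_edge h Hl) as [y1 Hy1].
  destruct (confine_to_neighbour_branch h _ _ Hl Hy1) as (z1 & Hz1 & C1).
  apply (cur_adj_app [_]) in Hz1.
  destruct (confine_to_neighbour_branch h _ _ Hl Hz1) as (z2 & Hz2 & C2).
  exists z1, z2. repeat split; auto.
  - intros ->. exact (cur_adj_deleted _ _ _ Hz2).
  - exact (proj1 Hz1).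
  - exact (proj1 Hz2).
Qed.

Definition down (x y a b : V) : Prop :=
  adj a b /\ confinable (branch a b) /\ branch x y b /\ ~ branch a b y.

Lemma down_edge_at_cat x y h : adj x y -> legal h -> (forall v, comp h v -> branch x y v) ->
  exists z, down x y (pos h) z.
Proof.
  intros Hxy Hl Htrap.
  destruct (two_confining_branches h Hl) as (z1 & z2 & Hne & Hz1 & Hz2 & C1 & C2).
  assert (Hr : branch x y (pos h)) by (apply Htrap, rt_refl).
  assert (Hdown : forall z, adj (pos h) z -> confinable (fun v => branch (pos h) z v /\ comp h v) ->
            ~ branch (pos h) z y -> down x y (pos h) z).
  { intros z Hz Cz Hy. split; [exact Hz|split; [|split; [|exact Hy]]].
    - apply (confinable_mono _ _ (fun v Hv => proj1 Hv) Cz).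
    - apply NNPP; intro Hn. destruct (branch_exit x y _ z Hz Hr Hn) as [Er Ez].
      destruct (confinable_inhabited _ Cz) as (v & Hv & Hcv). rewrite Er, Ez in Hv.
      exact (opposite_branches_disjoint x y v Hxy (Htrap v Hcv) Hv). }
  destruct (classic (branch (pos h) z1 y)) as [H1|H1]; [|exists z1; auto].
  destruct (classic (branch (pos h) z2 y)) as [H2|H2]; [|exists z2; auto].
  destruct (sibling_branches_disjoint _ _ _ y Hz1 Hz2 Hne H1 H2).
Qed.

Lemma down_tail_in_branch x y a b : down x y a b -> branch x y a.
Proof.
  intros (Hab & _ & Hb & Hy). apply NNPP; intro Ha.
  destruct (branch_entry x y a b Hab Ha Hb) as [-> ->]. apply Hy, rt_refl.
Qed.

Lemma down_tail_outside_sibling x y a b a' b' : down x y a b -> down x y a' b' ->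
  (forall v, branch a b v -> branch a' b' v -> False) -> ~ branch a' b' a.
Proof.
  intros (Hab & _ & _ & Hy) (_ & _ & _ & Hy') Hdisj Ha.
  destruct (branch_exit a' b' a b Hab Ha (Hdisj b (rt_refl _ _ _))) as [-> ->].
  destruct (branch_cover a' b' y); auto.
Qed.

Lemma cat_on_path_to_down_edge x y r z h : adj x y -> down x y r z -> legal h ->
  (forall v, comp h v -> branch x y v) -> ~ branch r z (pos h) ->
  (forall a1 b1 a2 b2, down x y a1 b1 -> down x y a2 b2 ->
     exists v, branch a1 b1 v /\ branch a2 b2 v) ->
  pos h = r \/ on_path y r (pos h).
Proof.
  intros Hxy Drz Hl Htrap Hout Hnest.
  destruct (down_edge_at_cat x y h Hxy Hl Htrap) as [z' D'].
  destruct (classic (pos h = r)) as [|Hne]; [left; assumption|right].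
  exists z'. split; [apply D'|split; [|apply D']].
  apply NNPP; intro Hr. destruct (Hnest _ _ _ _ D' Drz) as (v & Hv1 & Hv2).
  exact (branches_disjoint _ z' r z v Hne (proj1 Drz) Hr Hout Hv1 Hv2).
Qed.

Lemma two_disjoint_down_edges x y : adj x y -> confinable (branch x y) ->
  exists a1 b1 a2 b2, down x y a1 b1 /\ down x y a2 b2 /\
    (forall v, branch a1 b1 v -> branch a2 b2 v -> False).
Proof.
  intros Hxy (h0 & Hl0 & Htrap0). apply NNPP; intro Hno.
  assert (Hnest : forall a1 b1 a2 b2, down x y a1 b1 -> down x y a2 b2 ->
            exists v, branch a1 b1 v /\ branch a2 b2 v).
  { intros a1 b1 a2 b2 D1 D2. apply NNPP; intro Hn. apply Hno.
    exists a1, b1, a2, b2. split; [exact D1|split; [exact D2|]]. intros v H1 H2; eauto. }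
  destruct (down_edge_at_cat x y h0 Hxy Hl0 Htrap0) as [z Drz]. set (r := pos h0) in Drz.
  (* Once [rz] is cut, the cat stays on the path from [y] to [r]. *)
  destruct (cut_edge_behind_cat h0 r z Hl0) as (l1 & Hl1 & Hcut & Hreach).
  set (h1 := l1 ++ h0) in *.
  assert (Hplaced : forall l, legal (l ++ h1) -> pos (l ++ h1) = r \/ on_path y r (pos (l ++ h1))).
  { intros l Hl. apply (cat_on_path_to_down_edge x y r z); auto.
    - intros v Hv. apply Htrap0, (comp_app l1 h0 v Hl1), (comp_app l h1 v Hl Hv).
    - apply (reach_without_edge (G h1) r z r); [intros a b H; exact (proj1 H)|exact Hcut| |].
      + apply rt_trans with (pos h1); [exact Hreach|exact (comp_app l h1 _ Hl (rt_refl _ _ _))].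
      + exact (branch_not_tail r z (proj1 Drz)). }
  (* The herder then deletes the finitely many edges of that path. *)
  assert (Hyr : crt adj y r)
    by (apply (clos_rt_mono (avoid_edge x y)); [intros a b H; exact (proj1 H)|apply Htrap0, rt_refl]).
  destruct (clos_rt_simple_walk _ _ _ Hyr) as (W & HW & HWl & _).
  destruct (delete_edges (walk_edges y W) h1 Hl1) as (l2 & Hl2 & Hdel).
  set (h2 := l2 ++ h1) in *.
  destruct (cat_has_edge h2 Hl2) as [y2 Hy2].
  destruct (cat_move h2 _ y2 Hl2 Hy2) as [Hne Hmove].
  apply (on_path_separated (G h2) y r (pos h2) (pos ((pos h2, y2) :: h2))).
  - intros a b H; exact (proj1 H).
  - apply cur_adj_sym.
  - intros u z' Huz Hr Hy. apply Hdel. rewrite <- HWl in Hr.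
    exact (on_path_edge_in_walk y W u z' HW Huz Hr Hy).
  - apply Hplaced; exact Hl2.
  - apply (Hplaced ((pos h2, y2) :: l2)). constructor; auto.
  - exact (not_eq_sym Hne).
  - eapply clos_rt_mono; [intros a b; apply (cur_adj_app [(pos h2, y2)])|]. apply clos_t_clos_rt, Hmove.
Qed.


Section Minor.
Variable y0 : V.
Hypothesis adj_c0_y0 : adj c0 y0.

Definition good_edge (e : V * V) : Prop :=
  adj (fst e) (snd e) /\ confinable (branch (fst e) (snd e)).

Definition splits (e : V * V) (c : (V * V) * (V * V)) : Prop :=
  down (fst e) (snd e) (fst (fst c)) (snd (fst c)) /\
  down (fst e) (snd e) (fst (snd c)) (snd (snd c)) /\
  forall v, branch (fst (fst c)) (snd (fst c)) v -> branch (fst (snd c)) (snd (snd c)) v -> False.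

Definition children (e : V * V) : (V * V) * (V * V) := epsilon (inhabits (e, e)) (splits e).

Definition child (e : V * V) (t : LR) : V * V :=
  match t with L => fst (children e) | R => snd (children e) end.

Definition edge_at (w : list LR) : V * V := fold_left child w (y0, c0).

Definition region (w : list LR) : V -> Prop := branch (fst (edge_at w)) (snd (edge_at w)).

Definition branch_set (w : list LR) (v : V) : Prop :=
  region w v /\ ~ region (w ++ [L]) v /\ ~ region (w ++ [R]) v.

Lemma children_split e : good_edge e -> splits e (children e).
Proof.
  intros [He Hc]. unfold children. apply epsilon_spec.
  destruct (two_disjoint_down_edges _ _ He Hc) as (a1 & b1 & a2 & b2 & H).
  exists ((a1, b1), (a2, b2)). exact H.
Qed.

Lemma child_good e t : good_edge e -> good_edge (child e t).
Proof.
  intros He. destruct (children_split e He) as ((H1 & H2 & _) & (H3 & H4 & _) & _).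
  destruct t; split; assumption.
Qed.

Lemma edge_at_good w : good_edge (edge_at w).
Proof.
  assert (Hroot : good_edge (y0, c0)).
  { split; [exact (adj_sym _ _ adj_c0_y0)|].
    apply (confinable_behind_cut []); [constructor|repeat split; auto]. }
  unfold edge_at. revert Hroot. generalize (y0, c0).
  induction w as [|t w IH]; intros e He; [exact He|]. apply IH, child_good, He.
Qed.

Lemma edge_at_snoc w t : edge_at (w ++ [t]) = child (edge_at w) t.
Proof. apply fold_left_app. Qed.

Lemma down_child w t :
  down (fst (edge_at w)) (snd (edge_at w)) (fst (edge_at (w ++ [t]))) (snd (edge_at (w ++ [t]))).
Proof.
  rewrite edge_at_snoc. destruct (children_split _ (edge_at_good w)) as (H1 & H2 & _).
  destruct t; assumption.
Qed.

Lemma children_disjoint w v : region (w ++ [L]) v -> region (w ++ [R]) v -> False.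
Proof.
  unfold region. rewrite !edge_at_snoc. apply (children_split _ (edge_at_good w)).
Qed.

Lemma region_below w t s v : region (w ++ t :: s) v -> region (w ++ [t]) v.
Proof.
  revert w t; induction s as [|t' s IH] using rev_ind; intros w t Hv; [exact Hv|].
  apply (IH w t). rewrite app_comm_cons, app_assoc in Hv.
  destruct (down_child (w ++ t :: s) t') as (_ & _ & Hb & Hy).
  exact (branch_subset _ _ _ _ v Hb Hy Hv).
Qed.

Lemma regions_diverge p t t' s s' v : t <> t' ->
  region (p ++ t :: s) v -> region (p ++ t' :: s') v -> False.
Proof.
  intros Ht H1 H2. apply region_below in H1, H2.
  destruct t, t'; try congruence; [exact (children_disjoint p v H1 H2)|exact (children_disjoint p v H2 H1)].
Qed.

Lemma branch_set_not_below w t s v : branch_set w v -> ~ region (w ++ t :: s) v.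
Proof. intros (_ & HL & HR) Hv. apply region_below in Hv. destruct t; auto. Qed.

Lemma branch_sets_disjoint w w' v : branch_set w v -> branch_set w' v -> w = w'.
Proof.
  intros H1 H2.
  destruct (list_prefix_or_diverge w w')
    as [->|[(t & s & ->)|[(t & s & ->)|(p & t & t' & s & s' & Ht & -> & ->)]]]; [reflexivity|..].
  - destruct (branch_set_not_below w t s v H1 (proj1 H2)).
  - destruct (branch_set_not_below w' t s v H2 (proj1 H1)).
  - destruct (regions_diverge p t t' s s' v Ht (proj1 H1) (proj1 H2)).
Qed.

Lemma branch_set_head w : branch_set w (snd (edge_at w)).
Proof.
  split; [apply rt_refl|]. split; intro Hv; [apply (down_child w L)|apply (down_child w R)]; exact Hv.
Qed.

Lemma branch_set_child_tail w t : branch_set w (fst (edge_at (w ++ [t]))).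
Proof.
  assert (Hsib : forall t', t <> t' -> ~ region (w ++ [t']) (fst (edge_at (w ++ [t])))).
  { intros t' Ht. unfold region. rewrite !edge_at_snoc.
    destruct (children_split _ (edge_at_good w)) as (D1 & D2 & Hdisj).
    destruct t, t'; try congruence; simpl.
    - exact (down_tail_outside_sibling _ _ _ _ _ _ D1 D2 Hdisj).
    - exact (down_tail_outside_sibling _ _ _ _ _ _ D2 D1 (fun v H1 H2 => Hdisj v H2 H1)). }
  assert (Hself : ~ region (w ++ [t]) (fst (edge_at (w ++ [t]))))
    by exact (branch_not_tail _ _ (proj1 (down_child w t))).
  split; [exact (down_tail_in_branch _ _ _ _ (down_child w t))|].
  destruct t; split; auto; apply Hsib; discriminate.
Qed.

Lemma branch_set_connected w u : branch_set w u ->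
  crt (fun a b => adj a b /\ branch_set w a /\ branch_set w b) (snd (edge_at w)) u.
Proof.
  intros Hu. set (d := snd (edge_at w)).
  destruct (clos_rt_simple_walk _ _ _ (clos_rt_in_reach _ d u (proj1 Hu))) as (l & Hw & Hl & Hn).
  assert (Hadj : walk V adj d l) by (eapply walk_mono; [|exact Hw]; intros a b H; exact (proj1 (proj1 H))).
  destruct (branch_set_head w) as (_ & HdL & HdR).
  destruct Hu as (_ & HuL & HuR). rewrite <- Hl in HuL, HuR |- *.
  eapply clos_rt_mono; [|apply (walk_restrict _ (branch_set w) d l Hw)].
  - intros a b (H & Ha & Hb). exact (conj (proj1 (proj1 H)) (conj Ha Hb)).
  - apply branch_set_head.
  - intros v Hv. split; [destruct (walk_target _ _ _ _ Hw Hv) as (a & _ & _ & Hv'); exact Hv'|].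
    split; [exact (simple_walk_outside_branch _ _ d l Hadj Hn HdL HuL v Hv)
           |exact (simple_walk_outside_branch _ _ d l Hadj Hn HdR HuR v Hv)].
Qed.

Lemma binary_tree_minor : is_minor (list LR) Bomega_adj V adj.
Proof.
  exists branch_set. split; [|split; [|split]].
  - intros w. exists (snd (edge_at w)). apply branch_set_head.
  - exact branch_sets_disjoint.
  - intros w u v Hu Hv. apply rt_trans with (snd (edge_at w)).
    + apply clos_rt_sym; [|exact (branch_set_connected w u Hu)].
      intros a b (H & Ha & Hb); auto.
    + exact (branch_set_connected w v Hv).
  - intros w w' [(t & ->)|(t & ->)].
    + exists (fst (edge_at (w ++ [t]))), (snd (edge_at (w ++ [t]))).
      split; [apply branch_set_child_tail|split; [apply branch_set_head|apply down_child]].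
    + exists (snd (edge_at (w' ++ [t]))), (fst (edge_at (w' ++ [t]))).
      split; [apply branch_set_head|split; [apply branch_set_child_tail|]].
      apply adj_sym, down_child.
Qed.

End Minor.

End Herding.

End Trees.

Section StrategyFromMinor.
Variable V : Type.
Variable adj : V -> V -> Prop.
Variable B : list LR -> V -> Prop.
Hypothesis B_disjoint : forall w w' v, B w v -> B w' v -> w = w'.
Hypothesis B_connected : forall w u v, B w u -> B w v ->
  clos_refl_trans V (fun x y => adj x y /\ B w x /\ B w y) u v.
Hypothesis B_adjacent : forall w w', Bomega_adj w w' -> exists u v, B w u /\ B w' v /\ adj u v.
Variable v0 : V.
Notation G := (cur_adj V adj).

Definition below (w : list LR) (v : V) : Prop := exists s, B (w ++ s) v.

Definition link (w : list LR) (t : LR) : V * V :=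
  epsilon (inhabits (v0, v0)) (fun e => B w (fst e) /\ B (w ++ [t]) (snd e) /\ adj (fst e) (snd e)).

Lemma link_spec w t :
  B w (fst (link w t)) /\ B (w ++ [t]) (snd (link w t)) /\ adj (fst (link w t)) (snd (link w t)).
Proof.
  unfold link. apply epsilon_spec.
  destruct (B_adjacent w (w ++ [t]) (or_introl (ex_intro _ t eq_refl))) as (u & v & H).
  exists (u, v). exact H.
Qed.

Definition home (w : list LR) : V := fst (link w L).

Definition touches_left (w : list LR) (e : V * V) : Prop :=
  below (w ++ [L]) (fst e) \/ below (w ++ [L]) (snd e).

Fixpoint word (h : history V) : list LR :=
  match h with
  | [] => []
  | e :: h' =>
      if excluded_middle_informative (touches_left (word h') e) then word h' ++ [R] else word h' ++ [L]
  end.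

Lemma below_of_B w v : B w v -> below w v.
Proof. intros H; exists []; rewrite app_nil_r; exact H. Qed.

Lemma below_child w t v : below (w ++ [t]) v -> below w v.
Proof. intros [s H]; exists (t :: s). rewrite <- app_assoc in H. exact H. Qed.

Lemma below_children_disjoint w v : below (w ++ [L]) v -> below (w ++ [R]) v -> False.
Proof.
  intros [s H1] [s' H2]. pose proof (B_disjoint _ _ _ H1 H2) as H.
  rewrite <- !app_assoc in H. apply app_inv_head in H. discriminate.
Qed.

Lemma B_not_below_child w t v : B w v -> ~ below (w ++ [t]) v.
Proof.
  intros H1 [s H2]. pose proof (f_equal (@length LR) (B_disjoint _ _ _ H1 H2)) as H.
  rewrite !length_app in H. simpl in H. lia.
Qed.

Lemma deleted_outside h a b : In (a, b) h -> ~ (below (word h) a /\ below (word h) b).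
Proof.
  induction h as [|e h IH]; [intros []|]. intros Hin [Ha Hb]. cbn [word] in Ha, Hb.
  destruct (excluded_middle_informative (touches_left (word h) e)) as [HT|HT];
    destruct Hin as [He|Hin]; try exact (IH Hin (conj (below_child _ _ _ Ha) (below_child _ _ _ Hb)));
    subst e.
  - destruct HT as [HT|HT]; eapply below_children_disjoint; eauto.
  - apply HT. left; exact Ha.
Qed.

Lemma kept_edge h e p q : adj p q -> below (word h) p -> below (word h) q ->
  (touches_left (word h) (p, q) <-> ~ touches_left (word h) e) -> G (e :: h) p q.
Proof.
  intros Hpq Hp Hq Hiff. split; [exact Hpq|]. split; intros [He|Hin].
  - subst e. tauto.
  - exact (deleted_outside h p q Hin (conj Hp Hq)).
  - subst e. unfold touches_left in *. simpl in *. tauto.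
  - exact (deleted_outside h q p Hin (conj Hq Hp)).
Qed.

Lemma cat_path h e : clos_trans V (G (e :: h)) (home (word h)) (home (word (e :: h))).
Proof.
  set (w := word h). cbn [word]. fold w.
  destruct (link_spec w L) as (Hhome & HL & HwL).
  destruct (excluded_middle_informative (touches_left w e)) as [HT|HT].
  - destruct (link_spec w R) as (Hr1 & Hr2 & Hr).
    destruct (link_spec (w ++ [R]) L) as (Hhome' & _ & _).
    assert (Hok : forall p q, adj p q -> B w p \/ B (w ++ [R]) p -> B w q \/ B (w ++ [R]) q ->
              G (e :: h) p q).
    { assert (Hside : forall v, B w v \/ B (w ++ [R]) v -> below w v /\ ~ below (w ++ [L]) v).
      { intros v [Hv|Hv]; split.
        - apply below_of_B, Hv.
        - apply B_not_below_child, Hv.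
        - apply (below_child _ R), below_of_B, Hv.
        - intro HvL. exact (below_children_disjoint w v HvL (below_of_B _ _ Hv)). }
      intros p q Hpq Hp Hq. destruct (Hside p Hp), (Hside q Hq).
      apply kept_edge; auto. unfold touches_left. simpl. tauto. }
    apply (clos_rt_step_trans _ _ (fst (link w R)) (snd (link w R))).
    + eapply clos_rt_mono; [|exact (B_connected w _ _ Hhome Hr1)]. intros p q (H1 & H2 & H3); auto.
    + auto.
    + eapply clos_rt_mono; [|exact (B_connected _ _ _ Hr2 Hhome')]. intros p q (H1 & H2 & H3); auto.
  - destruct (link_spec (w ++ [L]) L) as (Hhome' & _ & _).
    assert (Hok : forall p q, adj p q -> B w p \/ B (w ++ [L]) p -> B (w ++ [L]) q -> G (e :: h) p q).
    { intros p q Hpq Hp Hq.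
      assert (HqL : below (w ++ [L]) q) by (apply below_of_B, Hq).
      apply kept_edge; auto.
      - destruct Hp as [Hp|Hp]; [apply below_of_B, Hp|apply (below_child _ L), below_of_B, Hp].
      - apply (below_child _ L), HqL.
      - unfold touches_left at 1. simpl. tauto. }
    apply (clos_rt_step_trans _ _ (fst (link w L)) (snd (link w L))).
    + apply rt_refl.
    + auto.
    + eapply clos_rt_mono; [|exact (B_connected _ _ _ HL Hhome')]. intros p q (H1 & H2 & H3); auto.
Qed.

Lemma home_moves w t : home (w ++ [t]) <> home w.
Proof.
  intros H. destruct (link_spec w L) as (H1 & _). destruct (link_spec (w ++ [t]) L) as (H2 & _).
  unfold home in H. rewrite H in H2. exact (B_not_below_child w t _ H1 (below_of_B _ _ H2)).
Qed.

Lemma strategy_from_minor_wins : cat_strategy_wins V adj (home []) (fun h => home (word h)).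
Proof.
  split.
  - exists (snd (link [] L)). apply link_spec.
  - intros h a b _ _.
    replace (cat_pos V (home []) (fun h => home (word h)) h) with (home (word h))
      by (destruct h; reflexivity).
    pose proof (cat_path h (a, b)) as Hpath. split; [|split; [|exact Hpath]].
    + apply clos_trans_t1n in Hpath. destruct Hpath as [y Hy|y z Hy _]; exists y; exact Hy.
    + cbn [word]. destruct (excluded_middle_informative _); apply home_moves.
Qed.

End StrategyFromMinor.

Theorem mainTheorem12 (V : Type) (adj : V -> V -> Prop) :
  is_tree V adj ->
  (cat_win V adj <-> is_minor (list LR) Bomega_adj V adj).
Proof.
  intros [[adj_sym adj_irrefl] [adj_connected acyclic]]. split.
  - intros (c0 & sigma & wins). destruct (proj1 wins) as [y0 Hy0].
    exact (binary_tree_minor V adj adj_sym adj_irrefl acyclic adj_connected c0 sigma wins y0 Hy0).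
  - intros (B & B_nonempty & B_disjoint & B_connected & B_adjacent).
    destruct (B_nonempty []) as [v0 _].
    exists (home V adj B v0 []), (fun h => home V adj B v0 (word V B h)).
    exact (strategy_from_minor_wins V adj B B_disjoint B_connected B_adjacent v0).
Qed.
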